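(* If $\mu>-2$ and $|\nu|<|\mu+1|$, then $x\mapsto I_{\mu+1}(x)/\tilde{t}_{\mu,\nu}(x)$ is strictly increasing on $(0,\infty)$. If $\mu>-2$ and $|\mu+1|<|\nu|<\mu+3$, then $x\mapsto I_{\mu+1}(x)/\tilde{t}_{\mu,\nu}(x)$ is strictly decreasing on $(0,\infty)$.
   Context: For real $\mu,\nu$ the (normalized) modified Lommel function of the first kind is $$\tilde{t}_{\mu,\nu}(x)=\sum_{k=0}^\infty\frac{(\frac{1}{2}x)^{\mu+2k+1}}{\Gamma\big(k+\frac{\mu-\nu+3}{2}\big)\Gamma\big(k+\frac{\mu+\nu+3}{2}\big)},\quad x>0,$$ and $I_\alpha(x)=\sum_{k=0}^\infty\frac{(\frac{1}{2}x)^{2k+\alpha}}{k!\,\Gamma(k+\alpha+1)}$ is the modified Bessel function of the first kind. *)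

From Stdlib Require Import Reals.
From Coquelicot Require Import Coquelicot.
Open Scope R_scope.

(* Euler Gamma function for s > 0:  Gamma(s) = int_0^oo t^(s-1) e^(-t) dt,
   realised as the limit of the proper Riemann integrals over [1/(n+1), n+1].
   (Only ever evaluated at positive arguments in the statement.) *)
Definition Gamma (s : R) : R :=
  Lim_seq (fun n : nat =>
    RInt (fun t => Rpower t (s - 1) * exp (- t)) (/ (INR n + 1)) (INR n + 1)).

Definition besselI (a x : R) : R :=
  Series (fun k : nat =>
    Rpower (x / 2) (2 * INR k + a) / (INR (Factorial.fact k) * Gamma (INR k + a + 1))).

Definition lommel_t (mu nu x : R) : R :=
  Series (fun k : nat =>
    Rpower (x / 2) (mu + 2 * INR k + 1) /
      (Gamma (INR k + (mu - nu + 3) / 2) * Gamma (INR k + (mu + nu + 3) / 2))).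

(* Put z = (x/2)^2.  Both I_(mu+1)(x) and t_(mu,nu)(x) are (x/2)^(mu+1) times power series
   in z with positive coefficients a_k = 1/(k! Gamma(k+mu+2)) and
   b_k = 1/(Gamma(k+alpha) Gamma(k+beta)), alpha, beta = (mu -+ nu + 3)/2.  By Gamma(s+1) = s Gamma(s),
   (a_(k+1)/b_(k+1)) / (a_k/b_k) = (k+alpha)(k+beta) / ((k+1)(k+mu+2)), and the two quadratics
   differ by the constant ((mu+1)^2 - nu^2)/4, so a_k/b_k is strictly increasing or strictly
   decreasing according to the sign of |mu+1| - |nu|.  A quotient of power series with positive
   denominator coefficients inherits strict monotonicity from its coefficient ratio: if r is the
   value of the quotient at z, the coefficients a_k - r b_k change sign exactly once, and then
   sum (a_k - r b_k) w^k > 0 for w > z.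
   The Gamma of the definitions is the real part of a limit of truncated integrals, which is 0 if
   that limit is infinite; integration by parts gives Gamma(s+1) = s Gamma(s) in the extended
   reals, and a bound for 1 <= s <= 2 then propagates finiteness to every s > 0. *)

From Stdlib Require Import Reals Lra Lia Classical.
From Coquelicot Require Import Coquelicot.
Open Scope R_scope.

(** * The Gamma function *)

Lemma Rpower_pos x y : 0 < Rpower x y.
Proof. apply exp_pos. Qed.

Lemma continuous_Rpower_l y t : 0 < t -> continuous (fun x => Rpower x y) t.
Proof.
  intros Ht. apply (ex_derive_continuous (K := R_AbsRing) (V := R_NormedModule)).
  eexists. apply is_derive_Reals, derivable_pt_lim_power, Ht.
Qed.

Definition gamma_integrand (s t : R) : R := Rpower t (s - 1) * exp (- t).

Lemma gamma_integrand_pos s t : 0 < gamma_integrand s t.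
Proof. apply Rmult_lt_0_compat; [apply Rpower_pos | apply exp_pos]. Qed.

Lemma continuous_gamma_integrand s t : 0 < t -> continuous (gamma_integrand s) t.
Proof.
  intros Ht. apply (continuous_mult (fun x => Rpower x (s - 1)) (fun x => exp (- x))).
  - now apply continuous_Rpower_l.
  - apply (ex_derive_continuous (K := R_AbsRing) (V := R_NormedModule)). auto_derive. easy.
Qed.

Lemma ex_RInt_gamma_integrand s a b : 0 < a -> a <= b -> ex_RInt (gamma_integrand s) a b.
Proof.
  intros Ha Hab. apply (ex_RInt_continuous (V := R_CompleteNormedModule)).
  intros t Ht. rewrite Rmin_left in Ht by exact Hab. apply continuous_gamma_integrand. lra.
Qed.

Definition gamma_partial (s : R) (n : nat) : R :=
  RInt (gamma_integrand s) (/ (INR n + 1)) (INR n + 1).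

Definition gamma_limit (s : R) : Rbar := Lim_seq (gamma_partial s).

Lemma Gamma_gamma_limit s : Gamma s = real (gamma_limit s).
Proof. reflexivity. Qed.

Lemma truncation_bounds n : 0 < / (INR n + 1) /\ / (INR n + 1) <= 1 /\ 1 <= INR n + 1.
Proof.
  pose proof (pos_INR n). repeat split.
  - apply Rinv_0_lt_compat. lra.
  - rewrite <- Rinv_1. apply Rinv_le_contravar; lra.
  - lra.
Qed.

Lemma gamma_partial_incr s n : gamma_partial s n <= gamma_partial s (S n).
Proof.
  unfold gamma_partial. rewrite S_INR.
  destruct (truncation_bounds n) as (Ha & Ha1 & Hb).
  set (a := / (INR n + 1)) in *. set (b := INR n + 1) in *.
  assert (Ha' : 0 < / (b + 1) <= a) by (split; [apply Rinv_0_lt_compat | apply Rinv_le_contravar]; lra).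
  rewrite <- (RInt_Chasles _ (/ (b + 1)) a (b + 1)) by (apply ex_RInt_gamma_integrand; lra).
  rewrite <- (RInt_Chasles _ a b (b + 1)) by (apply ex_RInt_gamma_integrand; lra).
  assert (0 <= RInt (gamma_integrand s) (/ (b + 1)) a).
  { apply RInt_ge_0; [lra | apply ex_RInt_gamma_integrand; lra | intros; left; apply gamma_integrand_pos]. }
  assert (0 <= RInt (gamma_integrand s) b (b + 1)).
  { apply RInt_ge_0; [lra | apply ex_RInt_gamma_integrand; lra | intros; left; apply gamma_integrand_pos]. }
  unfold plus; simpl. lra.
Qed.

Lemma gamma_limit_ge s n : Rbar_le (gamma_partial s n) (gamma_limit s).
Proof.
  rewrite <- (Lim_seq_const (gamma_partial s n)). apply Lim_seq_le_loc.
  exists n. intros m Hm. induction Hm as [| m _ IH]; [lra |].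
  eapply Rle_trans; [exact IH | apply gamma_partial_incr].
Qed.

Lemma gamma_limit_pos s : Rbar_lt 0 (gamma_limit s).
Proof.
  apply Rbar_lt_le_trans with (gamma_partial s 1); [| apply gamma_limit_ge].
  unfold gamma_partial. simpl INR. replace (1 + 1) with 2 by ring.
  apply RInt_gt_0; [lra | intros; apply gamma_integrand_pos |].
  intros t Ht. apply continuous_gamma_integrand. lra.
Qed.

Definition gamma_boundary (s t : R) : R := Rpower t s * exp (- t).

Lemma is_derive_gamma_boundary s t : 0 < t ->
  is_derive (gamma_boundary s) t (s * gamma_integrand s t - gamma_integrand (s + 1) t).
Proof.
  intros Ht. unfold gamma_boundary, gamma_integrand. replace (s + 1 - 1) with s by ring.
  evar (d : R).
  assert (D : is_derive (fun x => Rpower x s * exp (- x)) t d).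
  { apply (is_derive_mult (fun x => Rpower x s) (fun x => exp (- x))).
    - apply is_derive_Reals, derivable_pt_lim_power, Ht.
    - auto_derive; easy.
    - intros; apply Rmult_comm. }
  subst d. replace (s * (Rpower t (s - 1) * exp (- t)) - Rpower t s * exp (- t))
    with (plus (mult (s * Rpower t (s - 1)) (exp (- t))) (mult (Rpower t s) (- (1) * exp (- t))))
    by (unfold plus, mult; simpl; ring).
  exact D.
Qed.

Lemma RInt_gamma_integrand_succ s a b : 0 < a -> a <= b ->
  RInt (gamma_integrand (s + 1)) a b
  = s * RInt (gamma_integrand s) a b + (gamma_boundary s a - gamma_boundary s b).
Proof.
  intros Ha Hab.
  set (f t := minus (scal s (gamma_integrand s t)) (gamma_integrand (s + 1) t)).
  assert (Hf : is_RInt f a b (minus (gamma_boundary s b) (gamma_boundary s a))).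
  { apply (is_RInt_derive (V := R_CompleteNormedModule)).
    - intros t Ht. rewrite Rmin_left in Ht by exact Hab. apply is_derive_gamma_boundary. lra.
    - intros t Ht. rewrite Rmin_left in Ht by exact Hab.
      apply (continuous_minus (V := R_NormedModule)).
      + apply (continuous_scal_r (K := R_AbsRing) (V := R_NormedModule) s).
        apply continuous_gamma_integrand. lra.
      + apply continuous_gamma_integrand. lra. }
  assert (Ex : forall r, ex_RInt (gamma_integrand r) a b) by (intros; apply ex_RInt_gamma_integrand; lra).
  assert (Hf' : is_RInt f a b
                  (minus (scal s (RInt (gamma_integrand s) a b)) (RInt (gamma_integrand (s + 1)) a b))).
  { apply (is_RInt_minus (V := R_NormedModule)); [apply (is_RInt_scal (V := R_NormedModule)) |];
      apply (RInt_correct (V := R_CompleteNormedModule)), Ex. }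
  apply (is_RInt_unique (V := R_CompleteNormedModule)) in Hf, Hf'.
  rewrite Hf in Hf'. unfold minus, plus, opp, scal in Hf'; simpl in Hf'. unfold mult in Hf'; simpl in Hf'.
  lra.
Qed.

Lemma is_lim_seq_INR_S : is_lim_seq (fun n => INR n + 1) p_infty.
Proof.
  apply is_lim_seq_ext with (fun n => INR (S n)); [intros; apply S_INR |].
  apply (is_lim_seq_incr_1 INR), is_lim_seq_INR.
Qed.

Lemma is_lim_gamma_boundary_p_infty s : is_lim (gamma_boundary s) p_infty 0.
Proof.
  apply is_lim_ext_loc with (fun t => exp (t * (s * (ln t / t) - 1))).
  { exists 0. intros t Ht. unfold gamma_boundary, Rpower. rewrite <- exp_plus. f_equal. field. lra. }
  assert (Hl : is_lim (fun t => s * (ln t / t) - 1) p_infty (-1)).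
  { replace (-1) with (s * 0 - 1) by ring.
    apply (is_lim_minus _ _ _ (Finite (s * 0)) (Finite 1)); [| apply is_lim_const | reflexivity].
    apply (is_lim_scal_l _ s p_infty 0), is_lim_div_ln_p. }
  assert (Hexp : is_lim (fun t => t * (s * (ln t / t) - 1)) p_infty m_infty).
  { replace m_infty with (Rbar_mult p_infty (-1)) by (simpl; case Rle_dec; intros; [exfalso; lra | reflexivity]).
    apply is_lim_mult; [apply is_lim_id | exact Hl | simpl; lra]. }
  eapply is_lim_comp; [apply is_lim_exp_m | exact Hexp | exists 0; easy].
Qed.

Lemma is_lim_gamma_boundary_0 s : 0 < s -> is_lim (fun t => gamma_boundary s (/ t)) p_infty 0.
Proof.
  intros Hs.
  assert (Hexp : is_lim (fun t => exp (- (s * ln t))) p_infty 0).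
  { eapply is_lim_comp; [apply is_lim_exp_m | | exists 0; easy].
    replace m_infty with (Rbar_opp (Rbar_mult s p_infty)) by (simpl; case Rle_dec; intros; [| exfalso; lra];
      case Rle_lt_or_eq_dec; intros; [reflexivity | exfalso; lra]).
    apply is_lim_opp, is_lim_scal_l, is_lim_ln_p. }
  apply is_lim_le_le_loc with (fun _ => 0) (fun t => exp (- (s * ln t))).
  - exists 0. intros t Ht. unfold gamma_boundary, Rpower. rewrite ln_Rinv by lra. split.
    + left. apply Rmult_lt_0_compat; apply exp_pos.
    + rewrite <- (Rmult_1_r (exp (- (s * ln t)))), <- exp_0. replace (s * - ln t) with (- (s * ln t)) by ring.
      apply Rmult_le_compat_l; [left; apply exp_pos |].
      left. apply exp_increasing. apply Ropp_lt_gt_0_contravar, Rinv_0_lt_compat. lra.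
  - apply is_lim_const.
  - exact Hexp.
Qed.

Lemma gamma_limit_succ s : 0 < s -> gamma_limit (s + 1) = Rbar_mult s (gamma_limit s).
Proof.
  intros Hs. unfold gamma_limit.
  rewrite (Lim_seq_ext _ (fun n => s * gamma_partial s n
             + (gamma_boundary s (/ (INR n + 1)) - gamma_boundary s (INR n + 1)))).
  2: { intros n. destruct (truncation_bounds n). apply RInt_gamma_integrand_succ; lra. }
  assert (Hb : is_lim_seq (fun n => gamma_boundary s (/ (INR n + 1)) - gamma_boundary s (INR n + 1)) 0).
  { replace (Finite 0) with (Finite (0 - 0)) by (f_equal; ring).
    apply is_lim_seq_minus'.
    - apply (is_lim_comp_seq (fun t => gamma_boundary s (/ t)) _ p_infty).
      + now apply is_lim_gamma_boundary_0.
      + exists 0%nat. easy.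
      + apply is_lim_seq_INR_S.
    - apply (is_lim_comp_seq (gamma_boundary s) _ p_infty).
      + apply is_lim_gamma_boundary_p_infty.
      + exists 0%nat. easy.
      + apply is_lim_seq_INR_S. }
  rewrite Lim_seq_plus.
  - rewrite (is_lim_seq_unique _ _ Hb), Lim_seq_scal_l, Rbar_plus_0_r. reflexivity.
  - apply ex_lim_seq_scal_l, ex_lim_seq_incr, gamma_partial_incr.
  - eexists; exact Hb.
  - rewrite (is_lim_seq_unique _ _ Hb), Lim_seq_scal_l.
    destruct (Rbar_mult s (Lim_seq (gamma_partial s))); easy.
Qed.

Lemma Rpower_le_1_plus s t : 1 <= s <= 2 -> 0 < t -> Rpower t (s - 1) <= 1 + t.
Proof.
  intros Hs Ht. destruct (Rle_lt_dec t 1).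
  - apply Rle_trans with (Rpower 1 (s - 1)); [apply Rle_Rpower_l; lra |].
    unfold Rpower. rewrite ln_1, Rmult_0_r, exp_0. lra.
  - apply Rle_trans with (Rpower t 1); [apply Rle_Rpower; lra |].
    rewrite Rpower_1; lra.
Qed.

(* Compare with the integrand (1 + t) e^(-t), whose antiderivative is -(2 + t) e^(-t). *)
Lemma gamma_partial_le_3 s n : 1 <= s <= 2 -> gamma_partial s n <= 3.
Proof.
  intros Hs. unfold gamma_partial. destruct (truncation_bounds n) as (Ha & Ha1 & Hb).
  set (a := / (INR n + 1)) in *. set (b := INR n + 1) in *.
  set (K t := - ((2 + t) * exp (- t))).
  assert (HK : is_RInt (fun t => (1 + t) * exp (- t)) a b (minus (K b) (K a))).
  { apply (is_RInt_derive (V := R_CompleteNormedModule) K).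
    - intros t _. unfold K. auto_derive; [easy | ring].
    - intros t _. apply (ex_derive_continuous (K := R_AbsRing) (V := R_NormedModule)).
      auto_derive. easy. }
  apply Rle_trans with (RInt (fun t => (1 + t) * exp (- t)) a b).
  - apply RInt_le; [lra | apply ex_RInt_gamma_integrand; lra | eexists; exact HK |].
    intros t Ht. apply Rmult_le_compat_r; [left; apply exp_pos | apply Rpower_le_1_plus; lra].
  - rewrite (is_RInt_unique _ _ _ _ HK). unfold minus, plus, opp, K; simpl.
    assert (0 < exp (- b)) by apply exp_pos.
    assert (exp (- a) < 1) by (rewrite <- exp_0; apply exp_increasing; lra).
    assert (0 < exp (- a)) by apply exp_pos.
    nra.
Qed.

Lemma gamma_limit_le_3 s : 1 <= s <= 2 -> Rbar_le (gamma_limit s) 3.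
Proof.
  intros Hs. unfold gamma_limit. rewrite <- (Lim_seq_const 3). apply Lim_seq_le_loc.
  exists 0%nat. intros n _. now apply gamma_partial_le_3.
Qed.

Lemma gamma_limit_finite_le_2 s : 0 < s <= 2 -> is_finite (gamma_limit s).
Proof.
  intros Hs. pose proof (gamma_limit_pos s) as Hpos.
  destruct (Rle_lt_dec 1 s).
  - pose proof (gamma_limit_le_3 s ltac:(lra)).
    destruct (gamma_limit s); easy.
  - pose proof (gamma_limit_le_3 (s + 1) ltac:(lra)) as Hle. rewrite gamma_limit_succ in Hle by lra.
    destruct (gamma_limit s); try easy. revert Hle. simpl.
    case Rle_dec; intros; [| lra]. revert Hle. case Rle_lt_or_eq_dec; intros; [easy | lra].
Qed.

Lemma gamma_limit_finite s : 0 < s -> is_finite (gamma_limit s).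
Proof.
  intros Hs. destruct (nfloor1_ex s Hs) as [n Hn]. revert s Hs Hn.
  induction n as [| n IH]; intros s Hs Hn.
  - apply gamma_limit_finite_le_2. simpl in Hn. lra.
  - rewrite S_INR in Hn. destruct (Rle_lt_dec s 2); [apply gamma_limit_finite_le_2; lra |].
    replace s with ((s - 1) + 1) by ring. rewrite gamma_limit_succ by lra.
    rewrite <- (IH (s - 1)) by lra. easy.
Qed.

Lemma Gamma_pos s : 0 < s -> 0 < Gamma s.
Proof.
  intros Hs. pose proof (gamma_limit_pos s) as H.
  rewrite <- (gamma_limit_finite s Hs) in H. exact H.
Qed.

Lemma Gamma_succ s : 0 < s -> Gamma (s + 1) = s * Gamma s.
Proof.
  intros Hs. rewrite !Gamma_gamma_limit, gamma_limit_succ, <- (gamma_limit_finite s Hs) by exact Hs.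
  reflexivity.
Qed.

Lemma Gamma_INR_plus_pos k p : 0 < p -> 0 < Gamma (INR k + p).
Proof. intros Hp. apply Gamma_pos. pose proof (pos_INR k). lra. Qed.

Lemma Gamma_INR_succ k p : 0 < p -> Gamma (INR (S k) + p) = (INR k + p) * Gamma (INR k + p).
Proof.
  intros Hp. rewrite S_INR. replace (INR k + 1 + p) with (INR k + p + 1) by ring.
  apply Gamma_succ. pose proof (pos_INR k). lra.
Qed.

(** * Quotients of power series *)

Lemma Series_nonneg (d : nat -> R) : (forall k, 0 <= d k) -> ex_series d -> 0 <= Series d.
Proof.
  intros Hd Ex. apply Rle_trans with (Series (fun k => 0 * d k)); [rewrite Series_scal_l; lra |].
  apply Series_le; [intros k; specialize (Hd k); lra | exact Ex].
Qed.

Lemma Series_ge_term (d : nat -> R) j : (forall k, 0 <= d k) -> ex_series d -> d j <= Series d.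
Proof.
  intros Hd Ex. rewrite (Series_incr_n d (S j)) by (auto; lia). simpl pred.
  assert (0 <= Series (fun k => d (S j + k)%nat)).
  { apply Series_nonneg; [intros; apply Hd | apply (ex_series_incr_n d (S j)), Ex]. }
  assert (d j <= sum_f_R0 d j).
  { destruct j as [| j]; [simpl; lra |]. rewrite tech5. pose proof (cond_pos_sum d j Hd). lra. }
  lra.
Qed.

Lemma Series_lt_Series (p q : nat -> R) j : (forall k, p k <= q k) -> p j < q j ->
  ex_series p -> ex_series q -> Series p < Series q.
Proof.
  intros Hle Hlt Ep Eq.
  pose proof (Series_ge_term (fun k => q k - p k) j) as Hj.
  rewrite Series_minus in Hj by assumption.
  assert (q j - p j <= Series q - Series p).
  { apply Hj; [intros k; specialize (Hle k); lra | apply (ex_series_minus q p); assumption]. }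
  lra.
Qed.

Lemma PSeries_pos (c : nat -> R) z : (forall k, 0 < c k) -> 0 < z -> ex_pseries c z ->
  0 < PSeries c z.
Proof.
  intros Hc Hz Ex. apply ex_pseries_R in Ex.
  apply Rlt_le_trans with (c 0%nat * z ^ 0); [simpl; rewrite Rmult_1_r; apply Hc |].
  apply (Series_ge_term (fun k => c k * z ^ k)); [| exact Ex].
  intros k. left. apply Rmult_lt_0_compat; [apply Hc | apply pow_lt, Hz].
Qed.

(* Scaling from z to w = t z multiplies the k-th term by t^k: the nonpositive terms
   (k < m) gain at most the factor t^m, the positive ones (k >= m) at least t^m. *)
Lemma PSeries_pos_of_sign_change (d : nat -> R) z w : 0 < z -> z < w ->
  ex_pseries d z -> ex_pseries d w -> PSeries d z = 0 ->
  (forall k, 0 < d k -> 0 < d (S k)) -> (exists k, d k <> 0) ->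
  0 < PSeries d w.
Proof.
  intros Hz Hzw Exz Exw Hd0 Hup [j Hj]. apply ex_pseries_R in Exz, Exw.
  assert (Hpos : exists k, 0 < d k).
  { apply NNPP. intros Hno.
    assert (Hle : forall k, d k <= 0) by (intros k; apply Rnot_lt_le; intros Hk; apply Hno; eauto).
    assert (Hlt : PSeries d z < Series (fun k => 0 * (d k * z ^ k))).
    { apply (Series_lt_Series _ _ j).
      - intros k. pose proof (Hle k). pose proof (pow_lt z k Hz). nra.
      - pose proof (Hle j). pose proof (pow_lt z j Hz). assert (d j < 0) by lra. nra.
      - exact Exz.
      - apply (ex_series_scal_l (V := R_NormedModule) 0), Exz. }
    rewrite Series_scal_l in Hlt. lra. }
  destruct (Wf_nat.dec_inh_nat_subset_has_unique_least_element (fun k => 0 < d k)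
              (fun k => classic _) Hpos) as (m & (Hm & Hmin) & _).
  assert (Hge : forall k, (m <= k)%nat -> 0 < d k) by (intros k Hk; induction Hk; auto).
  assert (Hlow : forall k, (k < m)%nat -> d k <= 0).
  { intros k Hk. apply Rnot_lt_le. intros Hdk. specialize (Hmin k Hdk). lia. }
  set (t := w / z).
  assert (Ht : 1 < t) by (apply Rlt_div_r; lra).
  assert (Hw : forall k, w ^ k = t ^ k * z ^ k).
  { intros k. rewrite <- Rpow_mult_distr. f_equal. unfold t. field. lra. }
  assert (Hlt : Series (fun k => t ^ m * (d k * z ^ k)) < PSeries d w).
  { apply (Series_lt_Series _ _ (S m)).
    - intros k. rewrite Hw. pose proof (pow_lt z k Hz).
      destruct (Nat.lt_ge_cases k m) as [Hk | Hk].
      + pose proof (Rle_pow t k m ltac:(lra) ltac:(lia)).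
        assert (d k * z ^ k <= 0) by (pose proof (Hlow k Hk); nra). nra.
      + pose proof (Rle_pow t m k ltac:(lra) Hk).
        assert (0 < d k * z ^ k) by (pose proof (Hge k Hk); nra). nra.
    - rewrite Hw. pose proof (Rlt_pow t m (S m) Ht ltac:(lia)).
      assert (0 < d (S m) * z ^ S m) by (pose proof (pow_lt z (S m) Hz); pose proof (Hge (S m) ltac:(lia)); nra).
      nra.
    - apply (ex_series_scal_l (V := R_NormedModule)), Exz.
    - exact Exw. }
  rewrite Series_scal_l in Hlt. unfold PSeries in Hd0. rewrite Hd0, Rmult_0_r in Hlt. exact Hlt.
Qed.

Section PSeriesRatio.

Variables a b : nat -> R.
Hypothesis b_pos : forall k, 0 < b k.
Hypothesis ratio_incr : forall k, a k / b k < a (S k) / b (S k).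

Lemma PSeries_ratio_lt z w : 0 < z -> z < w ->
  ex_pseries a z -> ex_pseries b z -> ex_pseries a w -> ex_pseries b w ->
  PSeries a z / PSeries b z < PSeries a w / PSeries b w.
Proof.
  intros Hz Hzw Eaz Ebz Eaw Ebw.
  assert (Bz : 0 < PSeries b z) by (apply PSeries_pos; auto).
  assert (Bw : 0 < PSeries b w) by (apply PSeries_pos; auto; lra).
  set (r := PSeries a z / PSeries b z).
  set (d := PS_minus a (PS_scal r b)).
  assert (Hd : forall k, d k = b k * (a k / b k - r)).
  { intros k. change (a k - r * b k = b k * (a k / b k - r)). field. apply Rgt_not_eq, b_pos. }
  assert (Ed : forall x, ex_pseries a x -> ex_pseries b x -> ex_pseries d x).
  { intros x Ea Eb. apply ex_pseries_minus; [exact Ea |].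
    apply ex_pseries_scal; [apply Rmult_comm | exact Eb]. }
  assert (Sd : forall x, ex_pseries a x -> ex_pseries b x -> PSeries d x = PSeries a x - r * PSeries b x).
  { intros x Ea Eb. unfold d. rewrite PSeries_minus, PSeries_scal; [reflexivity | exact Ea |].
    apply ex_pseries_scal; [apply Rmult_comm | exact Eb]. }
  assert (Hdw : 0 < PSeries d w).
  { apply (PSeries_pos_of_sign_change d z); auto.
    - rewrite Sd by assumption. unfold r. field. lra.
    - intros k. rewrite !Hd. intros Hk. pose proof (b_pos k). pose proof (b_pos (S k)).
      pose proof (ratio_incr k). assert (r < a k / b k) by nra. nra.
    - destruct (Req_dec (a 0%nat / b 0%nat) r) as [Heq | Hne].
      + exists 1%nat. rewrite Hd. pose proof (b_pos 1). pose proof (ratio_incr 0). nra.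
      + exists 0%nat. rewrite Hd. pose proof (b_pos 0). apply Rmult_integral_contrapositive.
        split; lra. }
  rewrite Sd in Hdw by assumption. apply (proj1 (Rlt_div_r _ _ _ Bw)). lra.
Qed.

End PSeriesRatio.

Lemma PSeries_ratio_gt (a b : nat -> R) z w :
  (forall k, 0 < a k) -> (forall k, 0 < b k) -> (forall k, a (S k) / b (S k) < a k / b k) ->
  0 < z -> z < w ->
  ex_pseries a z -> ex_pseries b z -> ex_pseries a w -> ex_pseries b w ->
  PSeries a w / PSeries b w < PSeries a z / PSeries b z.
Proof.
  intros Ha Hb Hdecr Hz Hzw Eaz Ebz Eaw Ebw.
  assert (Hpos : forall x, 0 < x -> ex_pseries a x -> ex_pseries b x -> 0 < PSeries b x / PSeries a x).
  { intros x Hx Ea Eb. apply Rdiv_lt_0_compat; apply PSeries_pos; assumption. }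
  rewrite <- (Rinv_div (PSeries b w)), <- (Rinv_div (PSeries b z)).
  apply Rinv_lt_contravar; [apply Rmult_lt_0_compat; apply Hpos; auto; lra |].
  apply PSeries_ratio_lt; auto.
  intros k. rewrite <- (Rinv_div (a k)), <- (Rinv_div (a (S k))).
  apply Rinv_lt_contravar; [| apply Hdecr].
  apply Rmult_lt_0_compat; apply Rdiv_lt_0_compat; auto.
Qed.

Lemma ex_pseries_quadratic_recurrence (c : nat -> R) p q : 0 < p -> 0 < q ->
  (forall k, c k <> 0) -> (forall k, c (S k) = c k / ((INR k + p) * (INR k + q))) ->
  forall x, ex_pseries c x.
Proof.
  intros Hp Hq Hc Hrec x. apply CV_radius_inside.
  rewrite (CV_radius_infinite_DAlembert c Hc); [easy |].
  apply is_lim_seq_ext with (fun n => / ((INR n + p) * (INR n + q))).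
  { intros n. pose proof (pos_INR n).
    assert (Hn : 0 < (INR n + p) * (INR n + q)) by nra.
    pose proof (Hc n).
    replace (c (S n) / c n) with (/ ((INR n + p) * (INR n + q)))
      by (rewrite Hrec; field; repeat split; (assumption || lra)).
    rewrite Rabs_pos_eq; [reflexivity |]. left. apply Rinv_0_lt_compat, Hn. }
  replace (Finite 0) with (Rbar_inv p_infty) by reflexivity.
  apply is_lim_seq_inv; [| discriminate].
  assert (Hlin : forall e, is_lim_seq (fun n => INR n + e) p_infty).
  { intros e. apply (is_lim_seq_plus _ _ p_infty e p_infty);
      [apply is_lim_seq_INR | apply is_lim_seq_const | reflexivity]. }
  apply (is_lim_seq_mult _ _ p_infty p_infty p_infty); [apply Hlin | apply Hlin | reflexivity].
Qed.

(** * The Bessel and Lommel series *)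

Lemma Rpower_plus_2INR x k m : 0 < x -> Rpower x (2 * INR k + m) = Rpower x m * (x ^ 2) ^ k.
Proof.
  intros Hx. rewrite Rpower_plus, Rmult_comm, <- pow_mult, <- Rpower_pow by exact Hx.
  rewrite mult_INR. reflexivity.
Qed.

Section BesselLommel.

Variables mu nu : R.
Hypothesis mu_gt : -2 < mu.
Hypothesis nu_lt : Rabs nu < mu + 3.

Definition bessel_coef (k : nat) : R := / (INR (Factorial.fact k) * Gamma (INR k + (mu + 2))).

Definition lommel_coef (k : nat) : R :=
  / (Gamma (INR k + (mu - nu + 3) / 2) * Gamma (INR k + (mu + nu + 3) / 2)).

Lemma lommel_params_pos : 0 < (mu - nu + 3) / 2 /\ 0 < (mu + nu + 3) / 2.
Proof. pose proof (Rabs_def2 _ _ nu_lt). lra. Qed.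

Lemma bessel_coef_pos k : 0 < bessel_coef k.
Proof.
  apply Rinv_0_lt_compat, Rmult_lt_0_compat; [apply INR_fact_lt_0 | apply Gamma_INR_plus_pos; lra].
Qed.

Lemma lommel_coef_pos k : 0 < lommel_coef k.
Proof.
  destruct lommel_params_pos.
  apply Rinv_0_lt_compat, Rmult_lt_0_compat; apply Gamma_INR_plus_pos; assumption.
Qed.

Lemma bessel_coef_succ k :
  bessel_coef (S k) = bessel_coef k / ((INR k + 1) * (INR k + (mu + 2))).
Proof.
  unfold bessel_coef. rewrite Gamma_INR_succ, fact_simpl, mult_INR, S_INR by lra.
  pose proof (INR_fact_lt_0 k). pose proof (pos_INR k). pose proof (Gamma_INR_plus_pos k (mu + 2) ltac:(lra)).
  field. repeat split; lra.
Qed.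

Lemma lommel_coef_succ k : lommel_coef (S k)
  = lommel_coef k / ((INR k + (mu - nu + 3) / 2) * (INR k + (mu + nu + 3) / 2)).
Proof.
  destruct lommel_params_pos as [Hp Hq].
  unfold lommel_coef. rewrite !Gamma_INR_succ by assumption.
  pose proof (pos_INR k). pose proof (Gamma_INR_plus_pos k _ Hp). pose proof (Gamma_INR_plus_pos k _ Hq).
  field. repeat split; lra.
Qed.

Lemma ex_pseries_bessel_coef x : ex_pseries bessel_coef x.
Proof.
  apply (ex_pseries_quadratic_recurrence _ 1 (mu + 2)); [lra | lra | | exact bessel_coef_succ].
  intros k. apply Rgt_not_eq, bessel_coef_pos.
Qed.

Lemma ex_pseries_lommel_coef x : ex_pseries lommel_coef x.
Proof.
  destruct lommel_params_pos.
  apply (ex_pseries_quadratic_recurrence _ ((mu - nu + 3) / 2) ((mu + nu + 3) / 2));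
    [assumption | assumption | | exact lommel_coef_succ].
  intros k. apply Rgt_not_eq, lommel_coef_pos.
Qed.

Lemma besselI_PSeries x : 0 < x ->
  besselI (mu + 1) x = Rpower (x / 2) (mu + 1) * PSeries bessel_coef ((x / 2) ^ 2).
Proof.
  intros Hx. unfold besselI, PSeries. rewrite <- Series_scal_l. apply Series_ext. intros k.
  rewrite Rpower_plus_2INR by lra. unfold bessel_coef.
  replace (INR k + (mu + 1) + 1) with (INR k + (mu + 2)) by ring. unfold Rdiv. ring.
Qed.

Lemma lommel_t_PSeries x : 0 < x ->
  lommel_t mu nu x = Rpower (x / 2) (mu + 1) * PSeries lommel_coef ((x / 2) ^ 2).
Proof.
  intros Hx. unfold lommel_t, PSeries. rewrite <- Series_scal_l. apply Series_ext. intros k.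
  replace (mu + 2 * INR k + 1) with (2 * INR k + (mu + 1)) by ring.
  rewrite Rpower_plus_2INR by lra. unfold lommel_coef, Rdiv. ring.
Qed.

Lemma besselI_lommel_t_ratio x : 0 < x ->
  besselI (mu + 1) x / lommel_t mu nu x
  = PSeries bessel_coef ((x / 2) ^ 2) / PSeries lommel_coef ((x / 2) ^ 2).
Proof.
  intros Hx. rewrite besselI_PSeries, lommel_t_PSeries by exact Hx.
  assert (0 < Rpower (x / 2) (mu + 1)) by apply Rpower_pos.
  assert (0 < PSeries lommel_coef ((x / 2) ^ 2)).
  { apply PSeries_pos; [apply lommel_coef_pos | apply pow_lt; lra | apply ex_pseries_lommel_coef]. }
  field. lra.
Qed.

Lemma coef_ratio_succ k :
  bessel_coef (S k) / lommel_coef (S k)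
  = bessel_coef k / lommel_coef k
    * (1 + ((mu + 1) ^ 2 - nu ^ 2) / (4 * ((INR k + 1) * (INR k + (mu + 2))))).
Proof.
  destruct lommel_params_pos. pose proof (pos_INR k).
  pose proof (bessel_coef_pos k). pose proof (lommel_coef_pos k).
  rewrite bessel_coef_succ, lommel_coef_succ. field. repeat split; nra.
Qed.

Lemma coef_ratio_incr : Rabs nu < Rabs (mu + 1) ->
  forall k, bessel_coef k / lommel_coef k < bessel_coef (S k) / lommel_coef (S k).
Proof.
  intros Hnu k. rewrite coef_ratio_succ.
  assert (Hsq : nu ^ 2 < (mu + 1) ^ 2) by (rewrite <- !Rsqr_pow2; apply Rsqr_lt_abs_1, Hnu).
  set (c := bessel_coef k / lommel_coef k).
  set (P := 4 * ((INR k + 1) * (INR k + (mu + 2)))).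
  assert (Hc : 0 < c) by (apply Rdiv_lt_0_compat; [apply bessel_coef_pos | apply lommel_coef_pos]).
  assert (HP : 0 < P) by (pose proof (pos_INR k); unfold P; apply Rmult_lt_0_compat; [lra |];
                          apply Rmult_lt_0_compat; lra).
  assert (0 < c * (((mu + 1) ^ 2 - nu ^ 2) / P))
    by (apply Rmult_lt_0_compat; [exact Hc | apply Rdiv_lt_0_compat; lra]).
  rewrite Rmult_plus_distr_l, Rmult_1_r. lra.
Qed.

Lemma coef_ratio_decr : Rabs (mu + 1) < Rabs nu ->
  forall k, bessel_coef (S k) / lommel_coef (S k) < bessel_coef k / lommel_coef k.
Proof.
  intros Hnu k. rewrite coef_ratio_succ.
  assert (Hsq : (mu + 1) ^ 2 < nu ^ 2) by (rewrite <- !Rsqr_pow2; apply Rsqr_lt_abs_1, Hnu).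
  set (c := bessel_coef k / lommel_coef k).
  set (P := 4 * ((INR k + 1) * (INR k + (mu + 2)))).
  assert (Hc : 0 < c) by (apply Rdiv_lt_0_compat; [apply bessel_coef_pos | apply lommel_coef_pos]).
  assert (HP : 0 < P) by (pose proof (pos_INR k); unfold P; apply Rmult_lt_0_compat; [lra |];
                          apply Rmult_lt_0_compat; lra).
  assert (0 < c * ((nu ^ 2 - (mu + 1) ^ 2) / P))
    by (apply Rmult_lt_0_compat; [exact Hc | apply Rdiv_lt_0_compat; lra]).
  replace (c * (1 + ((mu + 1) ^ 2 - nu ^ 2) / P)) with (c - c * ((nu ^ 2 - (mu + 1) ^ 2) / P))
    by (field; lra).
  lra.
Qed.

Lemma square_half_lt x y : 0 < x -> x < y -> 0 < (x / 2) ^ 2 /\ (x / 2) ^ 2 < (y / 2) ^ 2.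
Proof.
  intros Hx Hxy. split; [apply pow_lt; lra |].
  rewrite <- !Rsqr_pow2. apply Rsqr_incrst_1; lra.
Qed.

Lemma besselI_lommel_t_ratio_incr : Rabs nu < Rabs (mu + 1) -> forall x y, 0 < x -> x < y ->
  besselI (mu + 1) x / lommel_t mu nu x < besselI (mu + 1) y / lommel_t mu nu y.
Proof.
  intros Hnu x y Hx Hxy. destruct (square_half_lt x y Hx Hxy).
  rewrite !besselI_lommel_t_ratio by lra.
  apply PSeries_ratio_lt; [exact lommel_coef_pos | exact (coef_ratio_incr Hnu) | assumption | assumption
    | apply ex_pseries_bessel_coef | apply ex_pseries_lommel_coef
    | apply ex_pseries_bessel_coef | apply ex_pseries_lommel_coef].
Qed.

Lemma besselI_lommel_t_ratio_decr : Rabs (mu + 1) < Rabs nu -> forall x y, 0 < x -> x < y ->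
  besselI (mu + 1) y / lommel_t mu nu y < besselI (mu + 1) x / lommel_t mu nu x.
Proof.
  intros Hnu x y Hx Hxy. destruct (square_half_lt x y Hx Hxy).
  rewrite !besselI_lommel_t_ratio by lra.
  apply PSeries_ratio_gt; [exact bessel_coef_pos | exact lommel_coef_pos | exact (coef_ratio_decr Hnu)
    | assumption | assumption
    | apply ex_pseries_bessel_coef | apply ex_pseries_lommel_coef
    | apply ex_pseries_bessel_coef | apply ex_pseries_lommel_coef].
Qed.

End BesselLommel.

Theorem theorem3p2 (mu nu : R) :
  (mu > -2 -> Rabs nu < Rabs (mu + 1) ->
     forall x y, 0 < x -> x < y ->
       besselI (mu + 1) x / lommel_t mu nu x < besselI (mu + 1) y / lommel_t mu nu y)
  /\
  (mu > -2 -> Rabs (mu + 1) < Rabs nu -> Rabs nu < mu + 3 ->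
     forall x y, 0 < x -> x < y ->
       besselI (mu + 1) y / lommel_t mu nu y < besselI (mu + 1) x / lommel_t mu nu x).
Proof.
  split.
  - intros Hmu Hnu. apply besselI_lommel_t_ratio_incr; [lra | | exact Hnu].
    apply Rlt_trans with (Rabs (mu + 1)); [exact Hnu |]. apply Rabs_def1; lra.
  - intros Hmu Hnu Hnu3. apply besselI_lommel_t_ratio_decr; [lra | exact Hnu3 | exact Hnu].
Qed.
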